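(* Let $P_n$ be the path with $n$ vertices. (i) If $0\leq \alpha < \frac{1}{2}$, then for $1\leq k\leq n$, $$S_k(A_{\alpha}(P_n)) \leq 2\alpha k+\alpha-1+\alpha \csc\frac{\pi}{2n} \sin\frac{(2k+1)\pi}{2n} +(1-2\alpha)\csc\frac{\pi}{2(n+1)} \sin\frac{(2k+1)\pi}{2(n+1)}.$$ (ii) If $\frac{1}{2}\leq \alpha \leq 1$, then for $1\leq k\leq n$, $$S_k(A_{\alpha}(P_n))\leq 2\alpha k+(1-\alpha)\left(\csc\frac{\pi}{2n} \sin\frac{(2k+1)\pi}{2n}-1\right).$$
   Context: $A_{\alpha}(G)=\alpha D(G)+(1-\alpha)A(G)$, where $A(G)$ is the adjacency matrix and $D(G)$ the diagonal degree matrix. For a real symmetric matrix $M$ with eigenvalues $\lambda_1(M)\geq\cdots\geq\lambda_n(M)$, $S_k(M)=\sum_{i=1}^k\lambda_i(M)$. *)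

From HB Require Import structures.
From mathcomp Require Import all_boot all_order all_algebra.
From mathcomp Require Import reals trigo.
Set Implicit Arguments. Unset Strict Implicit. Unset Printing Implicit Defensive.
Import Order.TTheory GRing.Theory Num.Theory.
Local Open Scope ring_scope.

Definition path_adj (R : realType) (n : nat) : 'M[R]_n :=
  \matrix_(i < n, j < n) ((i.+1 == j :> nat) || (j.+1 == i :> nat))%:R.

Definition deg_mx (R : realType) (n : nat) (A : 'M[R]_n) : 'M[R]_n :=
  diag_mx (\row_(i < n) \sum_(j < n) A i j).

Definition A_alpha (R : realType) (n : nat) (alpha : R) (A : 'M[R]_n) : 'M[R]_n :=
  alpha *: deg_mx A + (1 - alpha) *: A.

(* s is the list of eigenvalues of M (with multiplicity), in nonincreasing
   order lambda_1 >= ... >= lambda_n: the characteristic polynomial splits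
   over R with roots exactly the entries of s. *)
Definition eigen_list (R : realType) (n : nat) (M : 'M[R]_n) (s : seq R) : Prop :=
  sorted (fun x y : R => y <= x) s /\
  char_poly M = \prod_(x <- s) ('X - x%:P).

Definition S_k (R : realType) (k : nat) (s : seq R) : R := \sum_(i < k) s`_i.

Definition csc (R : realType) (x : R) : R := (sin x)^-1.

(* By Ky Fan's maximum principle, S_k(M) is the largest value of tr(V M V^* )
   over k x n matrices V with orthonormal rows, so S_k is subadditive and
   positively homogeneous. With Q = D + A the signless Laplacian of P_n,
   A_alpha = alpha Q + (1 - 2 alpha) A for alpha < 1/2 and
   A_alpha = (1 - alpha) Q + (2 alpha - 1) D for alpha >= 1/2, both with
   nonnegative coefficients. The spectra of A and Q are explicit, namely
   2 cos (j pi / (n + 1)) and 2 + 2 cos (j pi / n) with sine eigenvectors, so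
   their S_k are Dirichlet-kernel sums of cosines, and S_k(D) <= 2k since
   every degree is at most 2. *)

From HB Require Import structures.
From mathcomp Require Import all_boot all_order all_algebra perm.
From mathcomp Require Import reals trigo complex.
From mathcomp Require Import ring lra zify.
Set Implicit Arguments.
Unset Strict Implicit.
Unset Printing Implicit Defensive.

Import Order.TTheory GRing.Theory Num.Theory.
Local Open Scope ring_scope.

Section Bathtub.
Variable R : numDomainType.

Lemma sum_indicator_ltn n k : (k <= n)%N ->
  \sum_(j < n) ((j < k)%N%:R : R) = k%:R.
Proof.
move=> kn; rewrite -[in RHS](card_ord k) -sumr_const.
rewrite (big_ord_widen n (fun=> 1) kn).
by rewrite [RHS]big_mkcond; apply: eq_bigr => j _; case: ltnP.
Qed.

Lemma bathtub_le n k (m r : 'I_n -> R) c : (k <= n)%N ->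
  (forall j, 0 <= r j <= 1) -> \sum_j r j = k%:R ->
  (forall j : 'I_n, (j < k)%N -> c <= m j) ->
  (forall j : 'I_n, (k <= j)%N -> m j <= c) ->
  \sum_j m j * r j <= \sum_(j < n | (j < k)%N) m j.
Proof.
move=> kn r01 sum_r m_top m_bot.
(* The difference is a sum of terms [(m j - c) * ([j < k] - r j) >= 0]. *)
have diffE : \sum_(j < n | (j < k)%N) m j - \sum_j m j * r j =
    \sum_(j < n) (m j - c) * ((j < k)%N%:R - r j).
  have -> : \sum_(j < n) (m j - c) * ((j < k)%N%:R - r j) =
      \sum_(j < n) ((j < k)%N%:R * m j - m j * r j)
      - c * (\sum_(j < n) ((j < k)%N%:R : R) - \sum_j r j).
    by rewrite -sumrB mulr_sumr -sumrB; apply: eq_bigr => j _; ring.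
  rewrite sum_indicator_ltn // sum_r subrr mulr0 subr0 sumrB big_mkcond.
  by congr (_ - _); apply: eq_bigr => j _; case: ltnP; rewrite ?mul1r ?mul0r.
rewrite -subr_ge0 diffE sumr_ge0 // => j _; have /andP[r_ge0 r_le1] := r01 j.
case: ltnP => [/m_top|/m_bot] mc.
  by rewrite mulr_ge0 ?subr_ge0.
by rewrite mulr_le0 ?subr_le0 // sub0r oppr_le0.
Qed.
End Bathtub.

Lemma char_poly_conj (F : fieldType) n (P A : 'M[F]_n) : P \in unitmx ->
  char_poly (invmx P *m A *m P) = char_poly A.
Proof.
move=> Pu; rewrite /char_poly /char_poly_mx.
have -> : 'X%:M - map_mx polyC (invmx P *m A *m P) =
   map_mx polyC (invmx P) *m ('X%:M - map_mx polyC A) *m map_mx polyC P.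
  rewrite mulmxBr mulmxBl !map_mxM; congr (_ - _).
  by rewrite mul_mx_scalar -scalemxAl -map_mxM mulVmx // map_mx1 scalemx1.
by rewrite !det_mulmx mulrAC -det_mulmx -map_mxM mulVmx // map_mx1 det1 mul1r.
Qed.

Lemma mxsub_diag_mx (R : nzRingType) n k (s : 'I_k -> 'I_n) (d : 'rV[R]_n) :
  injective s -> mxsub s s (diag_mx d) = diag_mx (\row_i d 0 (s i)).
Proof. by move=> s_inj; apply/matrixP => i j; rewrite !mxE (inj_eq s_inj). Qed.

Section KyFan.
Variable C : numClosedFieldType.
Local Open Scope sesquilinear_scope.

Lemma gram_diag_ge0 m n (Y : 'M[C]_(m, n)) j : 0 <= (Y^t* *m Y) j j.
Proof. by rewrite mxE sumr_ge0 // => i _; rewrite !mxE mulrC mul_conjC_ge0. Qed.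

Lemma unitary_gram_diag_le1 m n (Y : 'M[C]_(m, n)) j :
  Y \is unitarymx -> (Y^t* *m Y) j j <= 1.
Proof.
move=> /unitarymxP YY; set P := Y^t* *m Y.
have P_idem : P *m P = P by rewrite /P mulmxA -[_ *m Y *m _]mulmxA YY mulmx1.
have P_herm l : P l j = (P j l)^*.
  rewrite !mxE rmorph_sum; apply: eq_bigr => i _.
  by rewrite !mxE rmorphM /= conjCK mulrC.
(* [P j j = \sum_l |P j l|^2 >= P j j ^ 2] since P is an orthogonal projection. *)
have Pjj_sq : P j j * P j j <= P j j.
  have Pjj_sum : P j j = \sum_l P j l * P l j by rewrite -{1}P_idem mxE.
  rewrite [leRHS]Pjj_sum (bigD1 j) //= lerDl sumr_ge0 // => l _.
  by rewrite P_herm mul_conjC_ge0.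
have [->|Pjj_neq0] := eqVneq (P j j) 0; first exact: ler01.
have Pjj_gt0 : 0 < P j j by rewrite lt_def Pjj_neq0 gram_diag_ge0.
by rewrite -(ler_pM2l Pjj_gt0) mulr1.
Qed.

Lemma mxtrace_unitary_gram m n (Y : 'M[C]_(m, n)) :
  Y \is unitarymx -> \tr (Y^t* *m Y) = m%:R.
Proof. by move=> /unitarymxP YY; rewrite mxtrace_mulC YY mxtrace1. Qed.

Lemma mxtrace_compress_diag m n (Y : 'M[C]_(m, n)) (d : 'rV[C]_n) :
  \tr (Y *m diag_mx d *m Y^t*) = \sum_j d 0 j * (Y^t* *m Y) j j.
Proof.
rewrite -mulmxA mxtrace_mulC -mulmxA; apply: eq_bigr => j _.
by rewrite mul_diag_mx mxE.
Qed.

Lemma mxtrace_compress_diag_le k n (V : 'M[C]_(k, n)) (d : 'rV[C]_n) c :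
  V \is unitarymx -> (forall j, d 0 j <= c) ->
  \tr (V *m diag_mx d *m V^t*) <= k%:R * c.
Proof.
move=> V_unitary d_le.
rewrite mxtrace_compress_diag -(mxtrace_unitary_gram V_unitary).
by rewrite mulr_suml ler_sum // => j _; rewrite mulrC ler_wpM2l ?gram_diag_ge0.
Qed.

Lemma mxtrace_compress_le_top k n (B W : 'M[C]_n) (mu : 'rV[C]_n)
    (V : 'M[C]_(k, n)) c :
  W \is unitarymx -> W *m B = diag_mx mu *m W -> V \is unitarymx ->
  (k <= n)%N ->
  (forall j : 'I_n, (j < k)%N -> c <= mu 0 j) ->
  (forall j : 'I_n, (k <= j)%N -> mu 0 j <= c) ->
  \tr (V *m B *m V^t*) <= \sum_(j < n | (j < k)%N) mu 0 j.
Proof.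
move=> W_unitary WB V_unitary kn mu_top mu_bot.
set Y := V *m W^t*.
have Y_unitary : Y \is unitarymx by rewrite mul_unitarymx ?trmxC_unitary.
have -> : V *m B *m V^t* = Y *m diag_mx mu *m Y^t*.
  rewrite /Y trmx_mul map_mxM trmxCK !mulmxA -[_ *m diag_mx mu *m W]mulmxA -WB.
  by rewrite mulmxA mulmxKtV.
rewrite mxtrace_compress_diag.
apply: (bathtub_le (c := c)) => //; last exact: mxtrace_unitary_gram.
by move=> j; rewrite gram_diag_ge0 unitary_gram_diag_le1.
Qed.

Lemma compress_rowsub k n (s : 'I_k -> 'I_n) (U X : 'M[C]_n) :
  rowsub s U *m X *m (rowsub s U)^t* = mxsub s s (U *m X *m U^t*).
Proof. by rewrite mul_rowsub_mx trmx_mxsub map_mxsub -mxsub_mul. Qed.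

Lemma rowsub_unitary k n (s : 'I_k -> 'I_n) (U : 'M[C]_n) :
  U \is unitarymx -> injective s -> rowsub s U \is unitarymx.
Proof.
move=> /unitarymxP UU s_inj; apply/unitarymxP.
have := compress_rowsub s U 1%:M; rewrite !mulmx1 => ->.
rewrite UU -diag_const_mx.
by rewrite mxsub_diag_mx //; apply/matrixP => i j; rewrite !mxE.
Qed.

Lemma mxtrace_compress_rowsub k n (s : 'I_k -> 'I_n) (U M : 'M[C]_n) d :
  injective s -> U *m M *m U^t* = diag_mx d ->
  \tr (rowsub s U *m M *m (rowsub s U)^t*) = \sum_i d 0 (s i).
Proof.
move=> s_inj UMU; rewrite compress_rowsub UMU mxsub_diag_mx //.
by apply: eq_bigr => i _; rewrite !mxE eqxx mulr1n.
Qed.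

Lemma spectral_compress n (A : 'M[C]_n) : A \is normalmx ->
  spectralmx A *m A *m (spectralmx A)^t* = diag_mx (spectral_diag A).
Proof.
have /unitarymxP UU := spectral_unitarymx A.
move=> /orthomx_spectralP {2}->; rewrite invmx_unitary ?spectral_unitarymx //.
by rewrite !mulmxA UU mul1mx mulmxtVK ?spectral_unitarymx.
Qed.

Lemma char_poly_spectral n (A : 'M[C]_n) : A \is normalmx ->
  char_poly A = \prod_i ('X - (spectral_diag A 0 i)%:P).
Proof.
move=> /orthomx_spectralP {1}->.
rewrite char_poly_conj ?spectral_unit // char_poly_trig ?diag_mx_is_trig //.
by apply: eq_bigr => i _; rewrite mxE eqxx mulr1n.
Qed.

Lemma spectral_diag_perm n (A : 'M[C]_n) (r : seq C) : A \is normalmx ->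
  char_poly A = \prod_(x <- r) ('X - x%:P) ->
  exists p : 'S_n, forall i : 'I_n, r`_i = spectral_diag A 0 (p i).
Proof.
move=> A_normal charA.
have : perm_eq r [tuple spectral_diag A 0 i | i < n].
  apply: prod_XsubC_eq; rewrite -charA char_poly_spectral // big_tuple.
  by apply: eq_bigr => i _; rewrite tnth_mktuple.
case/tuple_permP => p r_perm; exists p => i.
by rewrite r_perm (nth_map i) ?size_enum_ord // nth_ord_enum tnth_mktuple.
Qed.

Lemma kyfan_attained k n (A : 'M[C]_n) (r : seq C) : A \is normalmx ->
  char_poly A = \prod_(x <- r) ('X - x%:P) -> (k <= n)%N ->
  exists2 V : 'M[C]_(k, n),
    V \is unitarymx & \tr (V *m A *m V^t*) = \sum_(i < k) r`_i.
Proof.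
move=> A_normal charA kn; have [p r_perm] := spectral_diag_perm A_normal charA.
pose s (i : 'I_k) := p (widen_ord kn i).
have s_inj : injective s by move=> i j /perm_inj /(congr1 val) /= /val_inj.
exists (rowsub s (spectralmx A)); first by rewrite rowsub_unitary ?spectral_unitarymx.
rewrite (mxtrace_compress_rowsub s_inj (spectral_compress A_normal)).
by apply: eq_bigr => i _; symmetry; exact: r_perm (widen_ord kn i).
Qed.
End KyFan.

Section RealEigenbasis.
Variable R : rcfType.

Lemma row_norm2_gt0 n (u : 'rV[R]_n) : u != 0 -> 0 < (u *m u^T) 0 0.
Proof.
move=> u_neq0; have sq_ge0 i : 0 <= u 0 i * u 0 i by rewrite -expr2 sqr_ge0.
rewrite mxE lt_def sumr_ge0 ?andbT => [|i _]; last by rewrite mxE sq_ge0.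
apply: contra u_neq0; rewrite psumr_eq0 => [/allP u0|i _]; last by rewrite mxE.
apply/eqP/rowP => i; have /eqP := u0 i (mem_index_enum _).
by rewrite !mxE => /eqP; rewrite mulf_eq0 orbb => /eqP.
Qed.

Lemma eigenvectors_orthogonal n (B : 'M[R]_n) (u v : 'rV[R]_n) a b :
  B^T = B -> u *m B = a *: u -> v *m B = b *: v -> a != b -> u *m v^T = 0.
Proof.
move=> B_sym uB vB ab.
have : a *: (u *m v^T) = b *: (u *m v^T).
  by rewrite [LHS]scalemxAl -uB -mulmxA -{1}B_sym -trmx_mul vB linearZ /= scalemxAr.
by move/eqP; rewrite -subr_eq0 -scalerBl scaler_eq0 subr_eq0 (negPf ab) => /eqP.
Qed.

Lemma orthonormal_eigenbasis n (B : 'M[R]_n) (y : 'I_n -> 'rV[R]_n)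
    (mu : 'I_n -> R) :
  B^T = B -> (forall j, y j *m B = mu j *: y j) -> injective mu ->
  (forall j, y j != 0) ->
  exists2 W : 'M[R]_n, W *m W^T = 1%:M & W *m B = diag_mx (\row_j mu j) *m W.
Proof.
move=> B_sym yB mu_inj y_neq0.
pose c j := (Num.sqrt ((y j *m (y j)^T) 0 0))^-1.
exists (\matrix_j (c j *: y j)).
  apply/matrixP => j l; rewrite mxE.
  transitivity (c j * c l * (y j *m (y l)^T) 0 0).
    rewrite mxE mulr_sumr; apply: eq_bigr => i _.
    by rewrite !mxE; ring.
  have [<-|jl] := eqVneq j l; last first.
    have mu_jl : mu j != mu l by apply: contra jl => /eqP/mu_inj ->.
    have := eigenvectors_orthogonal B_sym (yB j) (yB l) mu_jl.
    by move=> /matrixP /(_ 0 0); rewrite !mxE (negPf jl) => ->; rewrite mulr0.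
  have g_gt0 := row_norm2_gt0 (y_neq0 j).
  by rewrite /c -invfM -expr2 sqr_sqrtr ?ltW // mulVf ?gt_eqF // mxE eqxx.
apply/row_matrixP => j.
rewrite !row_mul row_diag_mx -scalemxAl -rowE !rowK -scalemxAl yB !mxE.
by rewrite !scalerA mulrC.
Qed.
End RealEigenbasis.

Section Trigonometry.
Variable R : realType.

Lemma sin_natmul_pi (m : nat) : sin (m%:R * pi) = 0 :> R.
Proof.
by have := alternatingn (@sinDpi R) m 0; rewrite add0r sin0 mulr0 mulr_natl.
Qed.

Lemma sinB_add_sinD (x t : R) : sin (x - t) + sin (x + t) = 2 * cos t * sin x.
Proof. by rewrite sinB sinD; ring. Qed.

Lemma sinD_sub_sinB (x t : R) : sin (x + t) - sin (x - t) = 2 * cos x * sin t.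
Proof. by rewrite sinB sinD; ring. Qed.

Lemma sum_cos_dirichlet (b : R) k : sin b != 0 ->
  \sum_(j < k) 2 * cos (j.+1%:R * (2 * b)) = sin ((2 * k%:R + 1) * b) / sin b - 1.
Proof.
move=> sb_neq0; elim: k => [|k IHk].
  by rewrite big_ord0 mulr0 add0r mul1r divff // subrr.
rewrite big_ord_recr /= IHk -[2 * cos _](mulfK sb_neq0) -sinD_sub_sinB.
rewrite -[k.+1%:R]natr1.
have -> : (2 * (k%:R + 1) + 1) * b = (k%:R + 1) * (2 * b) + b by ring.
have -> : (2 * k%:R + 1) * b = (k%:R + 1) * (2 * b) - b by ring.
by ring.
Qed.

Lemma sin_natmul_gt0 (t : R) (m N : nat) : 0 < t -> (0 < m < N)%N ->
  N%:R * t = pi -> 0 < sin (m%:R * t).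
Proof.
move=> t_gt0 /andP[m_gt0 mN] Nt; rewrite sin_gt0_pi // -Nt ltr_pM2r // ltr_nat mN.
by rewrite mulr_gt0 ?ltr0n.
Qed.

Lemma cos_natmul_lt (t : R) (i j N : nat) : 0 < t -> (i < j <= N)%N ->
  N%:R * t = pi -> cos (j%:R * t) < cos (i%:R * t).
Proof.
move=> t_gt0 /andP[ij jN] Nt.
have ij_R : i%:R * t < j%:R * t by rewrite ltr_pM2r ?ltr_nat.
have it_ge0 : 0 <= i%:R * t by rewrite mulr_ge0 ?ler0n ?ltW.
have jt_le : j%:R * t <= pi by rewrite -Nt ler_pM2r ?ler_nat.
by rewrite ltr_cos // !in_itv /=; apply/andP; split; lra.
Qed.
End Trigonometry.

Section RealKyFan.
Variable R : realType.
Local Notation C := R[i].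
Local Notation toC := (real_complex R).
Local Open Scope sesquilinear_scope.

Lemma map_mx_real_trC m n (A : 'M[R]_(m, n)) :
  (map_mx toC A)^t* = map_mx toC A^T.
Proof.
apply/matrixP => i j; rewrite !mxE conj_Creal //.
by apply/complex_realP; exists (A j i).
Qed.

Lemma map_mx_real_unitary n (W : 'M[R]_n) :
  W *m W^T = 1%:M -> map_mx toC W \is unitarymx.
Proof.
by move=> WW; apply/unitarymxP; rewrite map_mx_real_trC -map_mxM WW map_mx1.
Qed.

(* By Ky Fan's principle this says S_k(B) <= x; V is complex because the
   spectral theorem ([orthomx_spectralP]) needs a numClosedFieldType. *)
Definition kyfan_ub k n (B : 'M[R]_n) (x : R) : Prop :=
  forall V : 'M[C]_(k, n), V \is unitarymx ->
    \tr (V *m map_mx toC B *m V^t*) <= toC x.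

Lemma kyfan_ub_combine k n (B1 B2 : 'M[R]_n) a1 a2 x1 x2 : 0 <= a1 -> 0 <= a2 ->
  kyfan_ub k B1 x1 -> kyfan_ub k B2 x2 ->
  kyfan_ub k (a1 *: B1 + a2 *: B2) (a1 * x1 + a2 * x2).
Proof.
move=> a1_ge0 a2_ge0 ub1 ub2 V V_unitary.
rewrite map_mxD !map_mxZ mulmxDr mulmxDl -!scalemxAr -!scalemxAl mxtraceD !mxtraceZ.
by rewrite rmorphD !rmorphM lerD // ler_wpM2l ?ler0c ?ub1 ?ub2.
Qed.

Lemma kyfan_ub_diag k n (d : 'rV[R]_n) c :
  (forall j, d 0 j <= c) -> kyfan_ub k (diag_mx d) (k%:R * c).
Proof.
move=> d_le V V_unitary; rewrite map_diag_mx rmorphM rmorph_nat.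
by apply: mxtrace_compress_diag_le => // j; rewrite mxE lecR.
Qed.

Lemma kyfan_ub_eigen k n (B : 'M[R]_n) (y : 'I_n -> 'rV[R]_n) (mu : nat -> R) :
  B^T = B -> (forall j : 'I_n, y j *m B = mu j *: y j) -> (forall j, y j != 0) ->
  (forall i j, (i < j < n)%N -> mu j < mu i) -> (0 < k <= n)%N ->
  kyfan_ub k B (\sum_(j < k) mu j).
Proof.
move=> B_sym yB y_neq0 mu_decr /andP[k_gt0 kn] V V_unitary.
have mu_le i j : (i <= j < n)%N -> mu j <= mu i.
  by case/andP; rewrite leq_eqVlt => /predU1P[-> //|ij jn]; rewrite ltW ?mu_decr ?ij.
have mu_inj : injective (fun j : 'I_n => mu j).
  move=> i j /= mu_ij; apply/val_inj/eqP; case: ltngtP => // [ij|ji].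
    by have := mu_decr i j; rewrite ij ltn_ord mu_ij ltxx => /(_ isT).
  by have := mu_decr j i; rewrite ji ltn_ord mu_ij ltxx => /(_ isT).
have [W WW WB] := orthonormal_eigenbasis B_sym yB mu_inj y_neq0.
have WBC : map_mx toC W *m map_mx toC B =
    diag_mx (map_mx toC (\row_j mu j)) *m map_mx toC W.
  by rewrite -map_mxM WB map_mxM map_diag_mx.
have kn1 : (k.-1 < n)%N by rewrite prednK.
apply: le_trans (mxtrace_compress_le_top (c := toC (mu k.-1))
  (map_mx_real_unitary WW) WBC V_unitary kn _ _) _ => [j jk|j kj|].
- by rewrite !mxE lecR mu_le // kn1 andbT -ltnS prednK.
- by rewrite !mxE lecR mu_le // ltn_ord (leq_trans (leq_pred k)).
rewrite rmorph_sum (big_ord_widen n (fun j => toC (mu j)) kn) le_eqVlt.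
by apply/predU1l/eq_bigr => j _; rewrite !mxE.
Qed.

Lemma S_k_le_kyfan_ub k n (M : 'M[R]_n) (s : seq R) x : M^T = M ->
  eigen_list M s -> (k <= n)%N -> kyfan_ub k M x -> S_k k s <= x.
Proof.
move=> M_sym [_ charM] kn M_ub.
have M_normal : map_mx toC M \is normalmx.
  by apply/normalmxP; rewrite map_mx_real_trC M_sym.
have charMC : char_poly (map_mx toC M) = \prod_(z <- map toC s) ('X - z%:P).
  rewrite -map_char_poly charM rmorph_prod big_map.
  by apply: eq_bigr => z _; rewrite /= map_polyXsubC.
have [V V_unitary trV] := kyfan_attained (k := k) M_normal charMC kn.
have nth_toC i : (map toC s)`_i = toC s`_i.
  case: (ltnP i (size s)) => [/(nth_map 0 0)-> //|s_le].
  by rewrite !nth_default ?size_map ?rmorph0.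
rewrite -lecR /S_k rmorph_sum (le_trans _ (M_ub V V_unitary)) // trV.
by rewrite le_eqVlt; apply/predU1l/eq_bigr => i _; rewrite nth_toC.
Qed.
End RealKyFan.

Section AAlphaDecomposition.
Variable R : realType.

Lemma A_alpha_sym n alpha (A : 'M[R]_n) :
  A^T = A -> (A_alpha alpha A)^T = A_alpha alpha A.
Proof.
by move=> A_sym; rewrite /A_alpha /deg_mx linearD !linearZ /= tr_diag_mx A_sym.
Qed.

Lemma A_alpha_signless_adj n alpha (A : 'M[R]_n) :
  A_alpha alpha A = alpha *: (deg_mx A + A) + (1 - 2 * alpha) *: A.
Proof. by apply/matrixP => i j; rewrite !mxE; ring. Qed.

Lemma A_alpha_signless_deg n alpha (A : 'M[R]_n) :
  A_alpha alpha A = (1 - alpha) *: (deg_mx A + A) + (2 * alpha - 1) *: deg_mx A.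
Proof. by apply/matrixP => i j; rewrite !mxE; ring. Qed.
End AAlphaDecomposition.

Section PathSpectrum.
Variable R : realType.

Lemma path_adj_sym n : (path_adj R n)^T = path_adj R n.
Proof. by apply/matrixP => i j; rewrite !mxE orbC. Qed.

Lemma sum_mul_delta (F : nat -> R) n c :
  \sum_(l < n) F l * (l == c :> nat)%:R = (c < n)%:R * F c.
Proof.
rewrite (eq_bigr (fun l : 'I_n => if l == c :> nat then F l else 0)) => [|l _].
  by rewrite -big_mkcond big_ord1_eq; case: ltnP; rewrite ?mul1r ?mul0r.
by case: eqP; rewrite ?mulr1 ?mulr0.
Qed.

Lemma sum_path_adj_col n (g : nat -> R) (i : 'I_n) :
  \sum_(l < n) g l.+1 * path_adj R n l i =
  (0 < i)%:R * g i + (i.+1 < n)%:R * g i.+2.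
Proof.
have adjE l : path_adj R n l i = (l.+1 == i :> nat)%:R + (l == i.+1 :> nat)%:R.
  rewrite mxE [(i.+1 == l :> nat)]eq_sym; case: eqP => [<-|_]; last by rewrite add0r.
  by rewrite ltn_eqF ?addr0.
under eq_bigr => l _ do rewrite adjE mulrDr.
rewrite big_split /= (sum_mul_delta (fun l => g l.+1)); congr (_ + _).
case: i {adjE} => [[|m] /= m_lt]; first by rewrite mul0r big1 // => l _; rewrite mulr0.
under eq_bigr => l _ do rewrite eqSS.
by rewrite (sum_mul_delta (fun l => g l.+1)) ltnW.
Qed.

Lemma row_mul_path_adj n (g : nat -> R) :
  (\row_(l < n) g l.+1) *m path_adj R n =
  \row_(i < n) ((0 < i)%:R * g i + (i.+1 < n)%:R * g i.+2).
Proof.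
apply/rowP => i; rewrite !mxE -sum_path_adj_col.
by apply: eq_bigr => l _; rewrite mxE.
Qed.

Lemma path_degE n (i : 'I_n) :
  \sum_j path_adj R n i j = (0 < i)%:R + (i.+1 < n)%:R.
Proof.
have := sum_path_adj_col (fun=> 1) i; rewrite !mulr1 => <-.
by apply: eq_bigr => l _; rewrite mul1r !mxE orbC.
Qed.

Lemma lt0n_mulr_vanish (F : nat -> R) (i : nat) : F 0 = 0 -> (0 < i)%:R * F i = F i.
Proof. by case: i => [|i] F0; rewrite ?mul0r ?F0 ?mul1r. Qed.

Lemma ltSn_mulr_vanish (F : nat -> R) n (i : nat) : (i < n)%N -> F n = 0 ->
  (i.+1 < n)%:R * F i.+1 = F i.+1.
Proof.
move=> i_lt Fn; case: ltnP => [_|n_le]; first by rewrite mul1r.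
have /eqP-> : i.+1 == n by rewrite eqn_leq i_lt n_le.
by rewrite Fn mulr0.
Qed.

Lemma row_mul_path_adj_dirichlet n (g : nat -> R) : g 0 = 0 -> g n.+1 = 0 ->
  (\row_(l < n) g l.+1) *m path_adj R n = \row_(i < n) (g i + g i.+2).
Proof.
move=> g0 gn; rewrite row_mul_path_adj; apply/rowP => i; rewrite !mxE.
by rewrite lt0n_mulr_vanish // (@ltSn_mulr_vanish (fun m => g m.+1) n).
Qed.

Lemma row_mul_path_signless n (g : nat -> R) :
  g 0 + g 1 = 0 -> g n + g n.+1 = 0 ->
  (\row_(l < n) g l.+1) *m (deg_mx (path_adj R n) + path_adj R n) =
  \row_(i < n) (g i + g i.+1 *+ 2 + g i.+2).
Proof.
move=> g01 gn; rewrite mulmxDr row_mul_path_adj /deg_mx mul_mx_diag.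
apply/rowP => i; rewrite !mxE path_degE.
pose h m := g m + g m.+1.
transitivity ((0 < i)%:R * h i + (i.+1 < n)%:R * h i.+1); first by rewrite /h; ring.
by rewrite lt0n_mulr_vanish // (@ltSn_mulr_vanish h n) // /h; ring.
Qed.
End PathSpectrum.

Section PathKyFan.
Variable R : realType.

Lemma path_adj_eigen n (t : R) : sin (n.+1%:R * t) = 0 ->
  (\row_(l < n) sin (l.+1%:R * t)) *m path_adj R n =
  (2 * cos t) *: \row_(l < n) sin (l.+1%:R * t).
Proof.
move=> sin_nt; rewrite (@row_mul_path_adj_dirichlet _ _ (fun m => sin (m%:R * t))).
- apply/rowP => i; rewrite !mxE -sinB_add_sinD.
  by congr (sin _ + sin _); rewrite -!natr1; ring.
- by rewrite mul0r sin0.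
- exact: sin_nt.
Qed.

Lemma path_signless_eigen n (a : R) : sin (n%:R * (2 * a)) = 0 ->
  (\row_(l < n) sin ((2 * l%:R + 1) * a)) *m (deg_mx (path_adj R n) + path_adj R n) =
  (2 + 2 * cos (2 * a)) *: \row_(l < n) sin ((2 * l%:R + 1) * a).
Proof.
move=> sin_na; pose g (m : nat) := sin (2 * m%:R * a - a).
have gS (m : nat) : sin ((2 * m%:R + 1) * a) = g m.+1.
  by rewrite /g -[m.+1%:R]natr1; congr sin; ring.
have -> : \row_(l < n) sin ((2 * l%:R + 1) * a) = \row_(l < n) g l.+1.
  by apply/rowP => l; rewrite !mxE gS.
rewrite row_mul_path_signless.
- apply/rowP => i; rewrite !mxE /g.
  set x := 2 * i.+1%:R * a - a.
  have -> : 2 * i%:R * a - a = x - 2 * a by rewrite /x -[i.+1%:R]natr1; ring.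
  have -> : 2 * i.+2%:R * a - a = x + 2 * a.
    by rewrite /x -[i.+2%:R]natr1 -[i.+1%:R]natr1; ring.
  by rewrite addrAC sinB_add_sinD; ring.
- have -> : g 0 = - sin a by rewrite /g -sinN; congr sin; ring.
  have -> : g 1 = sin a by rewrite /g; congr sin; ring.
  by rewrite addNr.
- rewrite /g.
  have -> : 2 * n.+1%:R * a - a = n%:R * (2 * a) + a by rewrite -natr1; ring.
  have -> : 2 * n%:R * a - a = n%:R * (2 * a) - a by ring.
  by rewrite sinB_add_sinD sin_na mulr0.
Qed.

Lemma kyfan_ub_path_adj n k : (0 < k <= n)%N ->
  kyfan_ub k (path_adj R n)
    (sin ((2 * k%:R + 1) * pi / (2 * (n%:R + 1))) / sin (pi / (2 * (n%:R + 1))) - 1).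
Proof.
move=> k_range; set b := pi / (2 * (n%:R + 1)).
have n1_gt0 : 0 < n%:R + 1 :> R by rewrite natr1 ltr0n.
have b_gt0 : 0 < b by rewrite divr_gt0 ?pi_gt0 ?mulr_gt0.
have b2_gt0 : 0 < 2 * b by rewrite mulr_gt0.
have nb : n.+1%:R * (2 * b) = pi by rewrite /b -natr1; field; rewrite gt_eqF.
have sb_gt0 : 0 < sin b.
  have := @sin_natmul_gt0 _ b 1 (2 * n.+1) b_gt0; rewrite mul1r; apply.
    by rewrite mulnS.
  by rewrite natrM -mulrA mulrCA nb.
rewrite -mulrA -/b -sum_cos_dirichlet ?gt_eqF //.
apply: (kyfan_ub_eigen
  (y := fun j : 'I_n => \row_(l < n) sin (l.+1%:R * (j.+1%:R * (2 * b))))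
  (mu := fun j => 2 * cos (j.+1%:R * (2 * b)))) => //.
- exact: path_adj_sym.
- by move=> j; rewrite path_adj_eigen // mulrCA nb sin_natmul_pi.
- move=> j; have n_gt0 : (0 < n)%N by apply: leq_ltn_trans (ltn_ord j).
  apply/eqP => /rowP /(_ (Ordinal n_gt0)); rewrite !mxE mul1r; apply/eqP.
  by rewrite gt_eqF //; apply: (sin_natmul_gt0 b2_gt0 _ nb); rewrite /= ltnS.
- move=> i j /andP[ij jn]; rewrite ltr_pM2l // (cos_natmul_lt (N := n.+1) b2_gt0) //.
  by rewrite ltnS ij ltnW.
Qed.

Lemma kyfan_ub_path_signless n k : (0 < k <= n)%N ->
  kyfan_ub k (deg_mx (path_adj R n) + path_adj R n)
    (2 * k%:R + (sin ((2 * k%:R + 1) * pi / (2 * n%:R)) / sin (pi / (2 * n%:R)) - 1)).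
Proof.
move=> k_range; have n_gt0 : (0 < n)%N by case/andP: k_range => /leq_trans; apply.
set b := pi / (2 * n%:R).
have b_gt0 : 0 < b by rewrite divr_gt0 ?pi_gt0 ?mulr_gt0 ?ltr0n.
have b2_gt0 : 0 < 2 * b by rewrite mulr_gt0.
have nb : n%:R * (2 * b) = pi by rewrite /b; field; rewrite pnatr_eq0 -lt0n.
have n2b : (2 * n)%:R * b = pi by rewrite natrM -mulrA mulrCA nb.
have sb_gt0 : 0 < sin b.
  by have := @sin_natmul_gt0 _ b 1 (2 * n) b_gt0; rewrite mul1r; apply => //; lia.
rewrite -mulrA -/b -sum_cos_dirichlet ?gt_eqF //.
have -> : 2 * k%:R + \sum_(j < k) 2 * cos (j.+1%:R * (2 * b)) =
    \sum_(j < k) (2 + 2 * cos (2 * (j.+1%:R * b))).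
  rewrite big_split sumr_const card_ord /= mulr_natr.
  by congr (_ + _); apply: eq_bigr => j _; rewrite mulrCA.
apply: (kyfan_ub_eigen
  (y := fun j : 'I_n => \row_(l < n) sin ((2 * l%:R + 1) * (j.+1%:R * b)))
  (mu := fun j => 2 + 2 * cos (2 * (j.+1%:R * b)))) => //.
- by rewrite linearD /= tr_diag_mx path_adj_sym.
- move=> j; rewrite path_signless_eigen // -(sin_natmul_pi _ j.+1) -nb.
  by congr sin; ring.
- move=> j; apply/eqP => /rowP /(_ (Ordinal n_gt0)); rewrite !mxE mulr0 add0r mul1r.
  apply/eqP; rewrite gt_eqF //; apply: (sin_natmul_gt0 b_gt0 _ n2b).
  by have := ltn_ord j; lia.
- move=> i j /andP[ij jn]; rewrite ltrD2l ltr_pM2l // ![2 * (_ * b)]mulrCA.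
  by rewrite (cos_natmul_lt (N := n) b2_gt0) // ltnS ij.
Qed.

Lemma kyfan_ub_path_deg n k : kyfan_ub k (deg_mx (path_adj R n)) (k%:R * 2).
Proof.
apply: kyfan_ub_diag => i; rewrite mxE path_degE.
by case: (0 < i)%N; case: (i.+1 < n)%N => /=; lra.
Qed.
End PathKyFan.

Theorem theorem4p4 (R : realType) (n : nat) (alpha : R) (s : seq R) (k : nat) :
  eigen_list (A_alpha alpha (path_adj R n)) s ->
  (1 <= k <= n)%N ->
  (0 <= alpha < 1 / 2 ->
     S_k k s <= 2 * alpha * k%:R + alpha - 1
       + alpha * csc (pi / (2 * n%:R)) * sin ((2 * k%:R + 1) * pi / (2 * n%:R))
       + (1 - 2 * alpha) * csc (pi / (2 * (n%:R + 1)))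
           * sin ((2 * k%:R + 1) * pi / (2 * (n%:R + 1)))) /\
  (1 / 2 <= alpha <= 1 ->
     S_k k s <= 2 * alpha * k%:R
       + (1 - alpha) * (csc (pi / (2 * n%:R)) * sin ((2 * k%:R + 1) * pi / (2 * n%:R)) - 1)).
Proof.
move=> eig_s k_range; have kn : (k <= n)%N by case/andP: k_range.
have S_k_le := S_k_le_kyfan_ub (A_alpha_sym alpha (path_adj_sym R n)) eig_s kn.
have Q_ub := kyfan_ub_path_signless (R := R) k_range.
rewrite /csc; split => /andP[alpha_lo alpha_hi].
- have a2_ge0 : 0 <= 1 - 2 * alpha by lra.
  rewrite A_alpha_signless_adj in S_k_le.
  have A_ub := kyfan_ub_path_adj (R := R) k_range.
  have := S_k_le _ (kyfan_ub_combine alpha_lo a2_ge0 Q_ub A_ub).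
  by move/le_trans; apply; rewrite le_eqVlt; apply/predU1l; ring.
- have [a1_ge0 a2_ge0] : 0 <= 1 - alpha /\ 0 <= 2 * alpha - 1 by split; lra.
  rewrite A_alpha_signless_deg in S_k_le.
  have D_ub := @kyfan_ub_path_deg R n k.
  have := S_k_le _ (kyfan_ub_combine a1_ge0 a2_ge0 Q_ub D_ub).
  by move/le_trans; apply; rewrite le_eqVlt; apply/predU1l; ring.
Qed.
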